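(* Let $h_1,\dots,h_N\in\mathbb{C}$. Define $|h_{IDEAL}| = \max\{ |\sum_{i=1}^N b_i h_i| : b_i\in\mathbb{C},\ |b_i|\le 1\}$ and $|h_{REAL}| = \max\{ |\sum_{i=1}^N b_i h_i| : b_i \in\{0,1\}\}$. Then $|h_{REAL}| \ge \frac{|h_{IDEAL}|}{\pi}$.
   Context: Here $h_i$ is the (complex) channel contribution of the $i$-th element of a passive reflecting surface; $h_{IDEAL}$ corresponds to elements whose complex reflection coefficient can be set arbitrarily with magnitude at most $1$, and $h_{REAL}$ to elements restricted to two states (off $=0$, on $=1$). The direct-path term is not included. *)

From HB Require Import structures.
From mathcomp Require Import all_boot all_order all_algebra.
From mathcomp Require Import all_classical all_reals all_analysis.
From mathcomp Require Import complex.
Set Implicit Arguments. Unset Strict Implicit. Unset Printing Implicit Defensive.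
Import Order.TTheory GRing.Theory Num.Theory.
Local Open Scope ring_scope.
Local Open Scope classical_set_scope.

Definition cmod (R : realType) (z : R[i]) : R := Normc.normc z.

(* |h_IDEAL| = max { |sum_i b_i h_i| : b_i in C, |b_i| <= 1 } (as a supremum; it is attained) *)
Definition h_ideal (R : realType) (N : nat) (h : 'I_N -> R[i]) : R :=
  sup [set cmod (\sum_(i < N) b i * h i) |
         b in [set b : 'I_N -> R[i] | forall i, cmod (b i) <= 1]].

(* |h_REAL| = max { |sum_i b_i h_i| : b_i in {0,1} } (finite max; values are >= 0) *)
Definition h_real (R : realType) (N : nat) (h : 'I_N -> R[i]) : R :=
  \big[Num.max/0]_(b : {ffun 'I_N -> bool})
     cmod (\sum_(i < N) (b i)%:R * h i).

(* Choosing b_i = 1 exactly for the elements with Re (h_i e^{-it}) > 0 gives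
   |h_REAL| >= sum_i max (0, Re (h_i e^{-it})); adding the same bound at t + pi
   yields sum_i |Re (h_i e^{-it})| <= 2 |h_REAL| for every angle t. Over a half
   turn, |Re (z e^{-it})| has mean 2|z|/pi, so averaging in t gives
   sum_i |h_i| <= pi |h_REAL|, and trivially |h_IDEAL| <= sum_i |h_i|.
   The mean is bounded below through Riemann sums on the grid t = k pi/m:
   Re (z e^{-it}) is the derivative of a sinusoid of amplitude |z| that changes
   sign over a half turn, so the total variation of that sinusoid along the grid,
   which the Riemann sum controls up to O(|z|/m), is at least 2|z|. *)

From HB Require Import structures.
From mathcomp Require Import all_boot all_order all_algebra.
From mathcomp Require Import all_classical all_reals all_analysis.
From mathcomp Require Import complex.
From mathcomp Require Import ring lra.
Import Order.TTheory GRing.Theory Num.Theory numFieldNormedType.Exports.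
Set Implicit Arguments. Unset Strict Implicit. Unset Printing Implicit Defensive.
Local Open Scope ring_scope.
Local Notation Re := complex.Re.
Local Notation Im := complex.Im.

Section ArchimedeanLimit.
Variable R : archiRealFieldType.

Lemma ler_of_forall_sub_divn (x y c : R) :
  (forall m, (0 < m)%N -> x - c / m%:R <= y) -> x <= y.
Proof.
move=> hxy; apply/ler_addgt0Pr => e e_gt0.
set m := (Num.truncn (c / e)).+1.
have m_gt0 : (0 : R) < m%:R by rewrite ltr0n.
have c_lt : c / m%:R < e.
  by rewrite ltr_pdivrMr // mulrC -ltr_pdivrMr ?truncnS_gt.
by have := hxy m isT; lra.
Qed.

End ArchimedeanLimit.

Section Variation.
Variable R : numDomainType.

Lemma ler_norm_sub_sum_increments (y : nat -> R) (p q : nat) : (p <= q)%N ->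
  `|y q - y p| <= \sum_(p <= j < q) `|y j.+1 - y j|.
Proof. by move=> pq; rewrite -telescope_sumr //; exact: ler_norm_sum. Qed.

Lemma antiperiodic_norm_le_variation (y : nat -> R) (n k : nat) :
  y n = - y 0%N -> (k <= n)%N ->
  `|y k| *+ 2 <= \sum_(j < n) `|y j.+1 - y j|.
Proof.
move=> yn kn.
rewrite -(big_mkord xpredT (fun j => `|y j.+1 - y j|)) (big_cat_nat (leq0n k) kn).
have -> : `|y k| *+ 2 = `|(y k - y 0%N) - (y n - y k)|.
  by rewrite yn -normrMn; congr `|_|; ring.
apply: le_trans (ler_normB _ _) _.
by apply: lerD; exact: ler_norm_sub_sum_increments.
Qed.

End Variation.

Section Trigonometry.
Variable R : realType.

Lemma sin_le_id (x : R) : 0 <= x -> sin x <= x.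
Proof.
move=> x_ge0.
have [] := @MVT_segment R sin cos 0 x x_ge0 (fun c _ => is_derive_sin c).
  by apply/continuous_subspaceT => ?; exact: continuous_sin.
move=> c _ eq_sin; rewrite sin0 !subr0 in eq_sin.
by rewrite eq_sin; have := cos_le1 c; nra.
Qed.

Lemma one_sub_cos_le_sqr (x : R) : 0 <= x -> 1 - cos x <= x ^+ 2.
Proof.
move=> x_ge0.
have [] := @MVT_segment R cos (fun t => - sin t) 0 x x_ge0 (fun c _ => is_derive_cos c).
  by apply/continuous_subspaceT => ?; exact: continuous_cos.
move=> c; rewrite in_itv /= => /andP[c_ge0 c_le] eq_cos.
rewrite cos0 subr0 in eq_cos.
by have := sin_le_id c_ge0; have := sin_geN1 c; nra.
Qed.

End Trigonometry.

Section Projections.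
Variable R : realType.
Implicit Types (z w : R[i]) (t s : R).

Definition proj_dir z t := Re z * cos t + Im z * sin t.
(* [proj_perp z] is an antiderivative of [proj_dir z]. *)
Definition proj_perp z t := Re z * sin t - Im z * cos t.

Lemma cmodE z : cmod z = Num.sqrt (Re z ^+ 2 + Im z ^+ 2).
Proof. by case: z. Qed.

Lemma cmod_ge0 z : 0 <= cmod z.
Proof. by rewrite cmodE sqrtr_ge0. Qed.

Lemma cmod0 : cmod (0 : R[i]) = 0.
Proof. exact: Normc.normc0. Qed.

Lemma cmodM z w : cmod (z * w) = cmod z * cmod w.
Proof. exact: Normc.normcM. Qed.

Lemma Re_le_cmod z : Re z <= cmod z.
Proof.
apply: le_trans (ler_norm _) _.
by rewrite cmodE -sqrtr_sqr ler_wsqrtr // lerDl sqr_ge0.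
Qed.

Lemma proj_dirE z t : proj_dir z t = Re (z * (cos t -i* sin t)%C).
Proof. by case: z => a b; rewrite /proj_dir /=; ring. Qed.

Lemma cmod_cos_sin t : cmod (cos t -i* sin t)%C = 1.
Proof. by rewrite cmodE /= sqrrN cos2Dsin2 sqrtr1. Qed.

Lemma proj_dir_sqrD z t :
  proj_dir z t ^+ 2 + proj_perp z t ^+ 2 = Re z ^+ 2 + Im z ^+ 2.
Proof.
transitivity ((Re z ^+ 2 + Im z ^+ 2) * (cos t ^+ 2 + sin t ^+ 2)).
  by rewrite /proj_dir /proj_perp; ring.
by rewrite cos2Dsin2 mulr1.
Qed.

Lemma proj_perpD z t s :
  proj_perp z (t + s) = cos s * proj_perp z t + sin s * proj_dir z t.
Proof. rewrite /proj_perp /proj_dir sinD cosD; ring. Qed.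

Lemma proj_dirDpi z t : proj_dir z (t + pi) = - proj_dir z t.
Proof. rewrite /proj_dir sinDpi cosDpi; ring. Qed.

Lemma proj_perpDpi z t : proj_perp z (t + pi) = - proj_perp z t.
Proof. rewrite /proj_perp sinDpi cosDpi; ring. Qed.

Lemma continuous_proj_dir z : continuous (proj_dir z).
Proof.
move=> t; apply: (@continuousD _ _ _ (fun t => Re z * cos t) (fun t => Im z * sin t)).
  exact: (continuousM (@cst_continuous _ _ _ _) (@continuous_cos _ _)).
exact: (continuousM (@cst_continuous _ _ _ _) (@continuous_sin _ _)).
Qed.

Lemma proj_dir_root z : exists2 th, th \in `[0, pi] & proj_dir z th = 0.
Proof.
apply: IVT; first exact: pi_ge0.
  by apply/continuous_subspaceT => ?; exact: continuous_proj_dir.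
rewrite -[pi]add0r proj_dirDpi.
by case: (leP 0 (proj_dir z 0)) => ?; rewrite ge_min le_max; apply/andP; split;
  apply/orP; lra.
Qed.

Lemma norm_proj_perp_le z t : `|proj_perp z t| <= cmod z.
Proof.
rewrite cmodE -(proj_dir_sqrD z t) -sqrtr_sqr ler_wsqrtr //.
by rewrite lerDr sqr_ge0.
Qed.

Lemma norm_proj_perp_root z th : proj_dir z th = 0 -> `|proj_perp z th| = cmod z.
Proof. by move=> Xth; rewrite cmodE -(proj_dir_sqrD z th) Xth expr0n add0r sqrtr_sqr. Qed.

Lemma norm_proj_perp_near_root z th t : proj_dir z th = 0 -> 0 <= t ->
  (1 - t ^+ 2) * cmod z <= `|proj_perp z (th - t)|.
Proof.
move=> Xth t_ge0.
rewrite proj_perpD cosN sinN Xth mulr0 addr0 normrM norm_proj_perp_root //.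
apply: ler_wpM2r; first exact: cmod_ge0.
by apply: le_trans (ler_norm _); have := one_sub_cos_le_sqr t_ge0; lra.
Qed.

Lemma norm_proj_perp_increment z t d : 0 <= d <= pi ->
  `|proj_perp z (t + d) - proj_perp z t|
    <= cmod z * d ^+ 2 + d * `|proj_dir z t|.
Proof.
move=> /andP[d_ge0 d_lepi].
have -> : proj_perp z (t + d) - proj_perp z t
    = - ((1 - cos d) * proj_perp z t) + sin d * proj_dir z t.
  by rewrite proj_perpD; ring.
apply: le_trans (ler_normD _ _) _; rewrite normrN !normrM mulrC.
have cos_d : 0 <= 1 - cos d <= d ^+ 2.
  by rewrite one_sub_cos_le_sqr // subr_ge0 cos_le1.
have sin_d : 0 <= sin d <= d by rewrite sin_le_id // sin_ge0_pi ?d_ge0.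
case/andP: cos_d => c0 c1; case/andP: sin_d => s0 s1.
rewrite (ger0_norm c0) (ger0_norm s0).
by apply: lerD; apply: ler_pM => //; rewrite norm_proj_perp_le.
Qed.

Lemma exists_grid_proj_perp_large z m : (0 < m)%N ->
  exists2 k, (k <= m)%N &
    (1 - (pi / m%:R) ^+ 2) * cmod z <= `|proj_perp z (k%:R * (pi / m%:R))|.
Proof.
move=> m_gt0; set d := pi / m%:R.
have m_pos : (0 : R) < m%:R by rewrite ltr0n.
have d_gt0 : 0 < d by rewrite divr_gt0 ?pi_gt0.
have md : m%:R * d = pi by rewrite mulrC divfK ?gt_eqF.
have [th] := proj_dir_root z; rewrite in_itv /= => /andP[th_ge0 th_le] Xth.
set k := Num.truncn (th / d).
have /andP[] := truncn_itv (divr_ge0 th_ge0 (ltW d_gt0)).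
rewrite -/k ler_pdivlMr // ltr_pdivrMr // -natr1 mulrDl mul1r => kd_le th_lt.
exists k.
  by rewrite truncn_le_nat ltr_pdivrMr // -natr1 mulrDl mul1r md; lra.
have -> : k%:R * d = th - (th - k%:R * d) by ring.
apply: le_trans (norm_proj_perp_near_root _ _) => //; last lra.
apply: ler_wpM2r; first exact: cmod_ge0.
suff : (th - k%:R * d) ^+ 2 <= d ^+ 2 by lra.
by rewrite ler_sqr ?nnegrE; lra.
Qed.

Lemma riemann_sum_norm_proj_dir_ge z m : (0 < m)%N ->
  cmod z *+ 2 - 3 * pi * cmod z * (pi / m%:R)
    <= pi / m%:R * \sum_(k < m) `|proj_dir z (k%:R * (pi / m%:R))|.
Proof.
move=> m_gt0; set d := pi / m%:R; set r := cmod z.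
have m_pos : (0 : R) < m%:R by rewrite ltr0n.
have d_gt0 : 0 < d by rewrite divr_gt0 ?pi_gt0.
have md : m%:R * d = pi by rewrite mulrC divfK ?gt_eqF.
have d_lepi : d <= pi by rewrite -md ler_peMl ?ler1n ?ltW.
set y := fun k : nat => proj_perp z (k%:R * d).
have y_anti : y m = - y 0%N by rewrite /y md mul0r -proj_perpDpi add0r.
have [k k_le yk_ge] := exists_grid_proj_perp_large z m_gt0.
have {}yk_ge : (1 - d ^+ 2) * r <= `|y k| := yk_ge.
have variation := antiperiodic_norm_le_variation y_anti k_le.
have increments : \sum_(j < m) `|y j.+1 - y j|
    <= r * d * pi + d * \sum_(j < m) `|proj_dir z (j%:R * d)|.
  have incr j : `|y j.+1 - y j| <= r * d ^+ 2 + d * `|proj_dir z (j%:R * d)|.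
    rewrite /y -natr1 mulrDl mul1r; apply: norm_proj_perp_increment.
    by rewrite (ltW d_gt0) d_lepi.
  apply: le_trans (ler_sum (index_enum 'I_m) (fun j _ => incr j)) _.
  rewrite big_split /= sumr_const card_ord -mulr_sumr.
  suff -> : r * d ^+ 2 *+ m = r * d * pi by [].
  by rewrite -mulr_natr -md; ring.
have r_ge0 : 0 <= r := cmod_ge0 z.
have : r * d ^+ 2 <= r * d * pi by rewrite expr2 mulrA ler_wpM2l // mulr_ge0 // ltW.
move: variation; rewrite mulr2n; lra.
Qed.

End Projections.

Section ReflectingSurface.
Variable R : realType.
Implicit Types (t : R).

Lemma h_ideal_le_sum_cmod N (h : 'I_N -> R[i]) :
  h_ideal h <= \sum_(i < N) cmod (h i).
Proof.
apply: ge_sup.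
  exists (cmod (\sum_(i < N) 0 * h i)), (fun=> 0) => // i.
  by rewrite cmod0 ler01.
move=> _ [b b_le1 <-].
apply: (big_ind2 (fun (z : R[i]) (s : R) => cmod z <= s)).
- by rewrite cmod0.
- by move=> z1 z2 s1 s2 le1 le2; apply: le_trans (le_normcD _ _) (lerD le1 le2).
- by move=> i _; rewrite cmodM ler_piMl ?cmod_ge0.
Qed.

Lemma sum_pos_proj_dir_le_h_real N (h : 'I_N -> R[i]) t :
  \sum_(i < N) Num.max 0 (proj_dir (h i) t) <= h_real h.
Proof.
set b := [ffun i => 0 < proj_dir (h i) t].
apply: le_trans (le_bigmax _
  (fun b : {ffun 'I_N -> bool} => cmod (\sum_(i < N) (b i)%:R * h i)) b).
have -> : \sum_(i < N) Num.max 0 (proj_dir (h i) t)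
    = Re ((\sum_(i < N) (b i)%:R * h i) * (cos t -i* sin t)%C).
  rewrite mulr_suml linear_sum; apply: eq_bigr => i _.
  by rewrite ffunE -mulrA; case: ltP; rewrite ?mul1r ?mul0r // proj_dirE.
apply: le_trans (Re_le_cmod _) _.
by rewrite cmodM cmod_cos_sin mulr1.
Qed.

Lemma sum_norm_proj_dir_le_h_real N (h : 'I_N -> R[i]) t :
  \sum_(i < N) `|proj_dir (h i) t| <= h_real h *+ 2.
Proof.
rewrite mulr2n; apply: le_trans (lerD (sum_pos_proj_dir_le_h_real h t)
  (sum_pos_proj_dir_le_h_real h (t + pi))); rewrite -big_split /=.
apply: ler_sum => i _; rewrite proj_dirDpi.
case: (leP 0 (proj_dir (h i) t)) => X.
  by rewrite ger0_norm // lerDl le_max lexx.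
by rewrite ltr0_norm // add0r le_max lexx orbT.
Qed.

Lemma sum_cmod_le_pi_h_real N (h : 'I_N -> R[i]) :
  \sum_(i < N) cmod (h i) <= pi * h_real h.
Proof.
set S := \sum_(i < N) cmod (h i); set H := h_real h.
rewrite -(ler_pMn2r (isT : (0 < 2)%N)).
apply: (@ler_of_forall_sub_divn _ _ _ (3 * pi * S * pi)) => m m_gt0.
rewrite -[_ / m%:R]mulrA; set d := pi / m%:R.
have sum_riemann :
    \sum_(i < N) (cmod (h i) *+ 2 - 3 * pi * cmod (h i) * d)
    <= \sum_(i < N) d * \sum_(k < m) `|proj_dir (h i) (k%:R * d)|.
  by apply: ler_sum => i _; exact: riemann_sum_norm_proj_dir_ge.
rewrite sumrB sumrMnl -mulr_suml -mulr_sumr -/S -mulr_sumr exchange_big /=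
  in sum_riemann.
apply: le_trans sum_riemann _.
have d_ge0 : 0 <= d by rewrite divr_ge0 ?pi_ge0 ?ler0n.
have sum_h_real : \sum_(k < m) \sum_(i < N) `|proj_dir (h i) (k%:R * d)|
    <= \sum_(k < m) H *+ 2.
  by apply: ler_sum => k _; exact: sum_norm_proj_dir_le_h_real.
apply: le_trans (ler_wpM2l d_ge0 sum_h_real) _.
have md : d * m%:R = pi by rewrite divfK // pnatr_eq0 -lt0n.
by rewrite sumr_const card_ord mulrnAC -[H *+ m]mulr_natl -mulrnAr mulrA md mulrnAr.
Qed.

End ReflectingSurface.

Theorem theorem2 (R : realType) (N : nat) (h : 'I_N -> R[i]) :
  h_ideal h / pi <= h_real h.
Proof.
rewrite ler_pdivrMr ?pi_gt0 // mulrC.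
exact: le_trans (h_ideal_le_sum_cmod h) (sum_cmod_le_pi_h_real h).
Qed.
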